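(* For every integer $n\ge 3$, $$\pi_n=\frac{n}{2\cos(\pi/n)}\left(\cos\Big(\tfrac{\pi}{n}\big(2\lfloor\tfrac{n+1}{4}\rfloor-1\big)\Big)-\cos\Big(\tfrac{\pi}{n}\big(2\lfloor\tfrac{n+1}{4}\rfloor+1\big)\Big)\right),$$ equivalently $$\pi_n=\begin{cases} n\tan(\pi/n) & n\equiv 0\pmod 4,\\ n\tan(\pi/n)\cos\big(\tfrac{\pi}{2n}\big) & n \text{ odd},\\ n\sin(\pi/n) & n\equiv 2\pmod 4.\end{cases}$$ In particular $\pi_3=9/2$, $\pi_4=4$, $\pi_5=\tfrac{5(5-\sqrt5)}{4}$, $\pi_6=3$, $\pi_8=8\sqrt2-8$.
   Context: For a convex set $B\subset\mathbb{R}^2$ and an interior point $x_0$, $\|x\|_{B,x_0}:=\inf\{\xi>0 : x\in \xi(B-x_0)\}$. For $n\ge3$ let $B_n$ be a regular convex $n$-gon and $c_n$ its center; $\pi_n$ denotes one half of the perimeter of $B_n$ measured with $\|\cdot\|_{B_n,c_n}$, i.e. $\pi_n=\frac12\sum_{i=1}^n\|p_i-p_{i-1}\|_{B_n,c_n}$ where $p_0,\dots,p_n=p_0$ are the vertices of $B_n$ in counterclockwise order (this is independent of the size, position and orientation of $B_n$, and equals the clockwise value). *)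

From HB Require Import structures.
From mathcomp Require Import all_boot all_order all_algebra.
From mathcomp Require Import all_classical all_reals all_analysis.
Unset Printing Implicit Defensive.
Import Order.TTheory GRing.Theory Num.Theory.
Local Open Scope classical_set_scope.
Local Open Scope ring_scope.

Definition vtx (R : realType) (n k : nat) : R * R :=
  (cos (2 * pi * k%:R / n%:R), sin (2 * pi * k%:R / n%:R)).

Definition ngon (R : realType) (n : nat) : set (R * R) :=
  [set x | exists w : nat -> R,
     (forall i, 0 <= w i) /\ \sum_(i < n) w i = 1 /\
     x.1 = \sum_(i < n) w i * (vtx R n i).1 /\
     x.2 = \sum_(i < n) w i * (vtx R n i).2].

Definition gauge (R : realType) (B : set (R * R)) (x0 x : R * R) : R :=
  inf [set xi : R | 0 < xi /\
        exists y, B y /\ x = (xi * (y.1 - x0.1), xi * (y.2 - x0.2))].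

(* Half of the perimeter of B_n measured in its own gauge about its centre c_n = 0:
   pi_n = 1/2 * sum_{i=1}^n ||p_i - p_{i-1}||  (p_n = p_0). *)
Definition pi_n (R : realType) (n : nat) : R :=
  2^-1 * \sum_(i < n)
    @gauge R (ngon R n) (0, 0)
      ((vtx R n i.+1).1 - (vtx R n i).1, (vtx R n i.+1).2 - (vtx R n i).2).

(* The gauge of a vector x is computed from a certificate: a supporting line
   al * y.1 + be * y.2 <= 1 of the polygon on which x / g lies gives
   ||x|| = g = al * x.1 + be * x.2.  With a = pi / n, the edge p_(i+1) - p_i
   has length 2 sin a and points in direction (2i+1) a + pi / 2, while the
   facets of B_n have outward normals (2j+1) a and lie at distance cos a from
   the centre.  The facet k = (n+1)/4 steps ahead of the edge (a quarter turn)
   supports B_n in the direction of the edge, so every edge has gauge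
   2 sin a sin (2 k a) / cos a, and pi_n is n / 2 times that.  The case
   formulas evaluate sin (2 k a) according to n mod 4. *)

From HB Require Import structures.
From mathcomp Require Import all_boot all_order all_algebra.
From mathcomp Require Import all_classical all_reals all_analysis.
From mathcomp Require Import ring lra zify.
Set Implicit Arguments.
Unset Strict Implicit.
Unset Printing Implicit Defensive.
Import Order.TTheory GRing.Theory Num.Theory.
Local Open Scope ring_scope.

Lemma gauge_supportE (R : realType) (B : set (R * R)) (x : R * R) (al be g : R) :
  0 < g ->
  (forall y, B y -> al * y.1 + be * y.2 <= 1) ->
  al * x.1 + be * x.2 = g ->
  (exists y, B y /\ x = (g * y.1, g * y.2)) ->
  gauge R B (0, 0) x = g.
Proof.
move=> g_gt0 B_le1 xg [y [By xE]].
rewrite /gauge; set S := (X in inf X).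
have Sg : S g by split=> //; exists y; rewrite !subr0.
have lbS : lbound S g.
  move=> xi [xi_gt0 [z [Bz xz]]]; move: xg; rewrite xz /= !subr0 => <-.
  have -> : al * (xi * z.1) + be * (xi * z.2) = xi * (al * z.1 + be * z.2) by ring.
  by rewrite -[leRHS]mulr1 ler_wpM2l ?(ltW xi_gt0) ?B_le1.
apply/eqP; rewrite eq_le (ge_inf _ Sg) ?(lb_le_inf _ lbS) //; by exists g.
Qed.

Lemma ngon_halfplane (R : realType) n (al be c : R) :
  (forall m, (m < n)%N -> al * (vtx R n m).1 + be * (vtx R n m).2 <= c) ->
  forall y, ngon R n y -> al * y.1 + be * y.2 <= c.
Proof.
move=> vtx_le y [w [w_ge0 [w_sum [-> ->]]]].
have -> : c = \sum_(i < n) w i * c by rewrite -mulr_suml w_sum mul1r.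
rewrite !mulr_sumr -big_split /=; apply: ler_sum => i _.
have -> : al * (w i * (vtx R n i).1) + be * (w i * (vtx R n i).2)
   = w i * (al * (vtx R n i).1 + be * (vtx R n i).2) by ring.
by rewrite ler_wpM2l ?vtx_le.
Qed.

Lemma ngon_segment (R : realType) n j1 j2 (l : R) :
  (j1 < n)%N -> (j2 < n)%N -> j1 != j2 -> 0 <= l <= 1 ->
  ngon R n ((1 - l) * (vtx R n j1).1 + l * (vtx R n j2).1,
            (1 - l) * (vtx R n j1).2 + l * (vtx R n j2).2).
Proof.
move=> j1n j2n j12 /andP[l_ge0 l_le1].
pose w m : R := if m == j1 then 1 - l else if m == j2 then l else 0.
have sum_w (f : nat -> R) : \sum_(i < n) w i * f i = (1 - l) * f j1 + l * f j2.
  rewrite (bigD1 (Ordinal j1n)) //= (bigD1 (Ordinal j2n)) /=; last first.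
    by rewrite -val_eqE /= eq_sym.
  rewrite big1 ?addr0 ?addrA; first by rewrite /w eqxx eq_sym (negbTE j12) eqxx.
  move=> i /andP[i1 i2].
  by rewrite /w (negbTE (i1 : (i : nat) != j1)) (negbTE (i2 : (i : nat) != j2)) mul0r.
exists w; split; first by move=> i; rewrite /w; case: ifP => _; [lra | case: ifP].
split; last by rewrite (sum_w (fun i => (vtx R n i).1)) (sum_w (fun i => (vtx R n i).2)).
by have := sum_w (fun=> 1); rewrite !mulr1 subrK; under eq_bigr do rewrite mulr1.
Qed.

Lemma cosDnat2pi (R : realType) (x : R) q : cos (x + 2 * pi * q%:R) = cos x.
Proof.
by rewrite -(periodicn (@cosD2pi R) q x); congr (_ (_ + _)); rewrite mulr_natr mulr_natl.
Qed.

Lemma sinDnat2pi (R : realType) (x : R) q : sin (x + 2 * pi * q%:R) = sin x.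
Proof.
by rewrite -(periodicn (@sinD2pi R) q x); congr (_ (_ + _)); rewrite mulr_natr mulr_natl.
Qed.

Lemma vtxE (R : realType) n m :
  vtx R n m = (cos (2 * m%:R * (pi / n%:R)), sin (2 * m%:R * (pi / n%:R))).
Proof. by rewrite /vtx; congr (cos _, sin _); ring. Qed.

Lemma vtx_modn (R : realType) n m : (0 < n)%N -> vtx R n (m %% n) = vtx R n m.
Proof.
move=> n_gt0; have n_neq0 : (n%:R : R) != 0 by rewrite pnatr_eq0 -lt0n.
rewrite [in RHS](divn_eq m n) !vtxE.
have -> : 2 * (m %/ n * n + m %% n)%:R * (pi / n%:R)
    = 2 * (m %% n)%:R * (pi / n%:R) + 2 * pi * (m %/ n)%:R :> R.
  by rewrite natrD natrM; field.
by rewrite cosDnat2pi sinDnat2pi.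
Qed.

Section RegularPolygon.
Variables (R : realType) (n : nat).
Hypothesis n_ge3 : (3 <= n)%N.
Local Notation a := (pi / n%:R : R).

Let n_gt0 : (0 < n)%N. Proof. by apply: leq_trans n_ge3. Qed.
Let n_neq0 : (n%:R : R) != 0. Proof. by rewrite pnatr_eq0 -lt0n. Qed.
Let n_ge3R : (3 : R) <= n%:R. Proof. by rewrite (ler_nat R 3). Qed.

Let piE : pi = n%:R * a.
Proof. by field. Qed.

Lemma pi_div_gt0 : 0 < a.
Proof. by rewrite divr_gt0 ?pi_gt0 ?ltr0n. Qed.

Lemma pi_div_lt_pihalf : a < pi / 2.
Proof.
rewrite [in ltRHS]piE; have := pi_div_gt0; have := n_ge3R; nra.
Qed.

Lemma cos_pi_div_gt0 : 0 < cos a.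
Proof.
apply: cos_gt0_pihalf; have := pi_div_gt0; have := pi_div_lt_pihalf.
by move=> a_lt a_gt; apply/andP; split; lra.
Qed.

Lemma sin_pi_div_gt0 : 0 < sin a.
Proof. by apply: sin_gt0_pihalf; rewrite pi_div_gt0 pi_div_lt_pihalf. Qed.

Lemma cos_odd_mul_le p : (1 <= p <= 2 * n - 1)%N -> cos (p%:R * a) <= cos a.
Proof.
move=> /andP[p_ge1 p_le].
have P1 : (1 : R) <= p%:R by rewrite ler1n.
have P2 : (p%:R : R) + 1 <= 2 * n%:R.
  have : (p + 1 <= 2 * n)%N by lia.
  by rewrite -(ler_nat R) natrD natrM.
have a_gt0 := pi_div_gt0; have n3 := n_ge3R.
(* cos (u + v) - cos (u - v) = - 2 sin u sin v with both angles in [0, pi] *)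
set u := (p%:R + 1) / 2 * a; set v := (p%:R - 1) / 2 * a.
have sin_u : 0 <= sin u.
  apply: sin_ge0_pi; apply/andP; split; last rewrite [leRHS]piE; rewrite /u; nra.
have sin_v : 0 <= sin v.
  apply: sin_ge0_pi; apply/andP; split; last rewrite [leRHS]piE; rewrite /v; nra.
have -> : p%:R * a = u + v by rewrite /u /v; field.
have -> : a = u - v by rewrite /u /v; field.
rewrite cosD cosB; nra.
Qed.

Lemma ngon_facet_le j (y : R * R) : ngon R n y ->
  cos ((2 * j%:R + 1) * a) * y.1 + sin ((2 * j%:R + 1) * a) * y.2 <= cos a.
Proof.
wlog j_lt : j / (j < n)%N.
  move=> facet; have := facet _ (ltn_pmod j n_gt0).
  have -> : (2 * j%:R + 1) * a = (2 * (j %% n)%:R + 1) * a + 2 * pi * (j %/ n)%:R.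
    by rewrite {1}(divn_eq j n) natrD natrM; field.
  by rewrite cosDnat2pi sinDnat2pi.
set d := (2 * j%:R + 1) * a.
apply: ngon_halfplane => m m_lt; rewrite vtxE /=.
have -> : cos d * cos (2 * m%:R * a) + sin d * sin (2 * m%:R * a)
    = cos (2 * m%:R * a - d) by rewrite cosB; ring.
case: (ltnP j m) => [j_lt_m | m_le_j].
  have -> : 2 * m%:R * a - d = (2 * (m - j) - 1)%N%:R * a.
    have h : (1 <= 2 * (m - j))%N by lia.
    by rewrite (natrB _ h) natrM (natrB _ (ltnW j_lt_m)) /d; ring.
  by apply: cos_odd_mul_le; lia.
have -> : 2 * m%:R * a - d = - ((2 * (j - m) + 1)%N%:R * a).
  by rewrite natrD natrM (natrB _ m_le_j) /d; ring.
by rewrite cosN; apply: cos_odd_mul_le; lia.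
Qed.

Lemma ngon_facet_mem j (t : R) : `|t| <= sin a ->
  ngon R n (cos a * cos ((2 * j%:R + 1) * a) - t * sin ((2 * j%:R + 1) * a),
            cos a * sin ((2 * j%:R + 1) * a) + t * cos ((2 * j%:R + 1) * a)).
Proof.
rewrite ler_norml => /andP[t_ge t_le].
have sa_gt0 := sin_pi_div_gt0.
set l := (1 + t / sin a) / 2.
have l01 : 0 <= l <= 1.
  have : -1 <= t / sin a <= 1 by rewrite ler_pdivlMr ?ler_pdivrMr //; lra.
  by rewrite /l; move=> /andP[]; lra.
have j_neq_j1 : (j %% n != j.+1 %% n)%N.
  by rewrite -[X in (X %% n)%N]addn0 -addn1 eqn_modDl mod0n modn_small //; lia.
have := ngon_segment (ltn_pmod j n_gt0) (ltn_pmod j.+1 n_gt0) j_neq_j1 l01.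
rewrite !vtx_modn // !vtxE /=.
set d := (2 * j%:R + 1) * a.
have -> : 2 * j.+1%:R * a = d + a by rewrite -natr1 /d; ring.
have -> : 2 * j%:R * a = d - a by rewrite /d; ring.
move=> seg; apply: (@eq_ind _ _ (ngon R n) seg).
by rewrite cosB sinB cosD sinD /l; congr (_, _); field; rewrite gt_eqF.
Qed.

Lemma vtx_edge i :
  ((vtx R n i.+1).1 - (vtx R n i).1, (vtx R n i.+1).2 - (vtx R n i).2)
  = (- (2 * sin a * sin ((2 * i%:R + 1) * a)), 2 * sin a * cos ((2 * i%:R + 1) * a)).
Proof.
rewrite !vtxE /=; set th := (2 * i%:R + 1) * a.
have -> : 2 * i.+1%:R * a = th + a by rewrite -natr1 /th; ring.
have -> : 2 * i%:R * a = th - a by rewrite /th; ring.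
by rewrite cosD cosB sinD sinB; congr (_, _); ring.
Qed.

Local Notation phi := (2 * ((n + 1) %/ 4)%N%:R * a).

Lemma quarter_turn_bounds : 0 < sin phi /\ cos (phi + a) <= 0 <= cos (phi - a).
Proof.
set k := ((n + 1) %/ 4)%N.
have K1 : (1 : R) <= k%:R by rewrite ler1n /k; lia.
have K4 : 4 * (k%:R : R) <= n%:R + 1.
  have : (4 * k <= n + 1)%N by rewrite /k; lia.
  by rewrite -(ler_nat R) natrD natrM.
have K4' : (n%:R : R) <= 4 * k%:R + 2.
  have : (n <= 4 * k + 2)%N by rewrite /k; lia.
  by rewrite -(ler_nat R) natrD natrM.
have a_gt0 := pi_div_gt0; have n3 := n_ge3R; have pi_na := piE.
set b := pi / n%:R in a_gt0 pi_na *.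
split; first by apply: sin_gt0_pi; rewrite pi_na; apply/andP; split; nra.
apply/andP; split.
  rewrite -[_ + b](subrK (pi / 2)) cosDpihalf oppr_le0; apply: sin_ge0_pi.
  by rewrite pi_na; apply/andP; split; nra.
by apply: cos_ge0_pihalf; rewrite pi_na; apply/andP; split; nra.
Qed.

Lemma edge_gauge i :
  gauge R (ngon R n) (0, 0)
    ((vtx R n i.+1).1 - (vtx R n i).1, (vtx R n i.+1).2 - (vtx R n i).2)
  = 2 * sin a * sin phi / cos a.
Proof.
have [sin_phi /andP[cos_phiD cos_phiB]] := quarter_turn_bounds.
have ca_gt0 := cos_pi_div_gt0; have sa_gt0 := sin_pi_div_gt0.
have ca_neq0 : cos a != 0 by rewrite gt_eqF.
have sphi_neq0 : sin phi != 0 by rewrite gt_eqF.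
rewrite vtx_edge; set th := (2 * i%:R + 1) * a.
(* the supporting facet is the one a quarter turn ahead of the edge *)
set j := (i + (n + 1) %/ 4)%N.
set d := th + phi.
have dE : (2 * j%:R + 1) * a = d by rewrite /d /j /th natrD; ring.
have thE : th = d - phi by rewrite /d addrK.
set t := cos a * cos phi / sin phi.
have t_bound : `|t| <= sin a.
  rewrite ler_norml ler_pdivlMr ?ler_pdivrMr //.
  by move: cos_phiD cos_phiB; rewrite cosD cosB; lra.
apply: (@gauge_supportE _ _ _ (cos d / cos a) (sin d / cos a)).
- by rewrite divr_gt0 ?mulr_gt0.
- move=> y /(ngon_facet_le j); rewrite dE => facet.
  have -> : cos d / cos a * y.1 + sin d / cos a * y.2
      = (cos d * y.1 + sin d * y.2) / cos a by field.
  by rewrite ler_pdivrMr ?mul1r.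
- have sin_phiE : sin phi = sin d * cos th - cos d * sin th.
    by rewrite -sinB /d [th + phi]addrC addrK.
  by rewrite /= sin_phiE; field.
- exists (cos a * cos d - t * sin d, cos a * sin d + t * cos d); split.
    by have := ngon_facet_mem j t_bound; rewrite dE.
  by rewrite thE sinB cosB /t; congr (_, _) => /=; field; rewrite ca_neq0 sphi_neq0.
Qed.

End RegularPolygon.

Lemma pi_n_sinE (R : realType) n : (3 <= n)%N ->
  pi_n R n = n%:R * sin (pi / n%:R) * sin (2 * ((n + 1) %/ 4)%N%:R * (pi / n%:R))
             / cos (pi / n%:R).
Proof.
move=> n_ge3; rewrite /pi_n (eq_bigr _ (fun (i : 'I_n) _ => edge_gauge R n_ge3 i)).
rewrite sumr_const card_ord -mulr_natl; field.
by rewrite gt_eqF ?cos_pi_div_gt0.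
Qed.

Lemma pi_n_cosE (R : realType) n : (3 <= n)%N ->
  pi_n R n = n%:R / (2 * cos (pi / n%:R)) *
      (cos (pi / n%:R * (2 * ((n + 1) %/ 4)%N%:R - 1))
       - cos (pi / n%:R * (2 * ((n + 1) %/ 4)%N%:R + 1))).
Proof.
move=> n_ge3; rewrite pi_n_sinE //.
set a := pi / n%:R; set phi := 2 * ((n + 1) %/ 4)%N%:R * a.
have -> : a * (2 * ((n + 1) %/ 4)%N%:R - 1) = phi - a by rewrite /phi; ring.
have -> : a * (2 * ((n + 1) %/ 4)%N%:R + 1) = phi + a by rewrite /phi; ring.
rewrite cosB cosD; field.
by rewrite gt_eqF ?cos_pi_div_gt0.
Qed.

Lemma pi_n_mod4_0 (R : realType) n : (3 <= n)%N -> (n %% 4 = 0)%N ->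
  pi_n R n = n%:R * tan (pi / n%:R).
Proof.
move=> n_ge3 n_mod4; rewrite pi_n_sinE //.
have -> : 2 * ((n + 1) %/ 4)%N%:R * (pi / n%:R) = pi / 2 :> R.
  have : (0 < (n + 1) %/ 4)%N /\ n = (4 * ((n + 1) %/ 4))%N by lia.
  move: ((n + 1) %/ 4)%N => k [k_gt0 ->].
  by rewrite natrM; field; rewrite pnatr_eq0 -lt0n.
by rewrite sin_pihalf mulr1 /tan mulrA.
Qed.

Lemma pi_n_mod4_2 (R : realType) n : (3 <= n)%N -> (n %% 4 = 2)%N ->
  pi_n R n = n%:R * sin (pi / n%:R).
Proof.
move=> n_ge3 n_mod4; rewrite pi_n_sinE //.
have -> : 2 * ((n + 1) %/ 4)%N%:R * (pi / n%:R) = - (pi / n%:R - pi / 2) :> R.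
  have : n = (4 * ((n + 1) %/ 4) + 2)%N by lia.
  move: ((n + 1) %/ 4)%N => k nE; rewrite nE natrD natrM; field.
  by rewrite -natrM -natrD pnatr_eq0 addn2.
rewrite sinN sinBpihalf opprK; field.
by rewrite gt_eqF ?cos_pi_div_gt0.
Qed.

Lemma pi_n_odd (R : realType) n : (3 <= n)%N -> odd n ->
  pi_n R n = n%:R * tan (pi / n%:R) * cos (pi / (2 * n%:R)).
Proof.
move=> n_ge3 n_odd; rewrite pi_n_sinE //.
have n_neq0 : (n%:R : R) != 0 by rewrite pnatr_eq0 -lt0n; lia.
have -> : pi / (2 * n%:R) = pi / n%:R / 2 :> R by field.
(* the quarter turn misses pi / 2 by half an angle step, on one side or the other *)
have -> : sin (2 * ((n + 1) %/ 4)%N%:R * (pi / n%:R)) = cos (pi / n%:R / 2) :> R.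
  have : (n = 4 * ((n + 1) %/ 4) + 1 \/ n + 1 = 4 * ((n + 1) %/ 4))%N by lia.
  move: ((n + 1) %/ 4)%N => k [nE | nE].
    have -> : 2 * k%:R * (pi / n%:R) = - (pi / n%:R / 2 - pi / 2) :> R.
      have kE : (k%:R : R) = (n%:R - 1) / 4 by rewrite nE natrD natrM; field.
      by rewrite kE; field.
    by rewrite sinN sinBpihalf opprK.
  have -> : 2 * k%:R * (pi / n%:R) = pi / n%:R / 2 + pi / 2 :> R.
    have kE : (k%:R : R) = (n%:R + 1) / 4.
      by rewrite natr1 -addn1 nE natrM; field.
    by rewrite kE; field.
  by rewrite sinDpihalf.
rewrite /tan; field.
by rewrite gt_eqF ?cos_pi_div_gt0.
Qed.

Lemma cos_pi_div3 (R : realType) : cos (pi / 3%:R) = 1 / 2 :> R.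
Proof.
have c_gt0 := cos_pi_div_gt0 R (leqnn 3); set x : R := pi / 3%:R in c_gt0 *.
have : cos (x + x) = cos (pi - x) by congr cos; rewrite /x; field.
by rewrite cosD cosB cospi sinpi; have := cos2Dsin2 x; nra.
Qed.

Lemma cos_pi_div5_quadratic (R : realType) :
  4 * cos (pi / 5%:R) ^+ 2 - 2 * cos (pi / 5%:R) - 1 = 0 :> R.
Proof.
have c_gt0 := cos_pi_div_gt0 R (isT : (3 <= 5)%N); set x : R := pi / 5%:R in c_gt0 *.
have : cos (x + x + x) = cos (pi - (x + x)) by congr cos; rewrite /x; field.
rewrite cosB cospi sinpi !cosD !sinD -!expr2 => h.
have s2 := sin2cos2 x.
(* the triple-angle identity factors as (cos x + 1) times the claimed quadratic *)
have : (cos x + 1) * (4 * cos x ^+ 2 - 2 * cos x - 1) = 0 by nra.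
by move/eqP; rewrite mulf_eq0 => /orP[/eqP|/eqP //]; lra.
Qed.

Lemma pi_n3 (R : realType) : pi_n R 3 = 9 / 2.
Proof.
rewrite (pi_n_sinE R (leqnn 3)) (_ : ((3 + 1) %/ 4)%N = 1%N) //.
have -> : 2 * 1%:R * (pi / 3%:R) = pi - pi / 3%:R :> R by field.
rewrite sinB sinpi cospi cos_pi_div3 mul0r sub0r mulN1r opprK.
have := cos2Dsin2 (pi / 3%:R : R); rewrite cos_pi_div3.
set s := sin (pi / 3%:R) => s2.
have -> : (3%:R * s * s / (1 / 2) : R) = 6 * s ^+ 2 by rewrite expr2; field.
lra.
Qed.

Lemma pi_n4 (R : realType) : pi_n R 4 = 4.
Proof. by rewrite (@pi_n_mod4_0 R 4 isT erefl) tan_piquarter mulr1. Qed.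

Lemma pi_n5 (R : realType) : pi_n R 5 = 5 * (5 - Num.sqrt 5) / 4.
Proof.
have c_gt0 := cos_pi_div_gt0 R (isT : (3 <= 5)%N).
have q := cos_pi_div5_quadratic R.
rewrite (@pi_n_sinE R 5 isT) (_ : ((5 + 1) %/ 4)%N = 1%N) //.
have -> : 2 * 1%:R * (pi / 5%:R) = pi / 5%:R + pi / 5%:R :> R by field.
rewrite sinD; have h := cos2Dsin2 (pi / 5%:R : R).
set c := cos (pi / 5%:R) in q c_gt0 h *; set s := sin (pi / 5%:R) in h *.
have -> : Num.sqrt 5 = 4 * c - 1 :> R.
  have -> : (5 : R) = (4 * c - 1) ^+ 2 by nra.
  by rewrite sqrtr_sqr ger0_norm //; nra.
have -> : 5%:R * s * (s * c + c * s) / c = 10 * s ^+ 2 :> R.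
  by field; rewrite gt_eqF.
nra.
Qed.

Lemma pi_n6 (R : realType) : pi_n R 6 = 3.
Proof.
rewrite (@pi_n_mod4_2 R 6 isT erefl) -cosBpihalf -cosN.
have -> : - (pi / 6%:R - pi / 2) = pi / 3%:R :> R by field.
by rewrite cos_pi_div3; field.
Qed.

Lemma pi_n8 (R : realType) : pi_n R 8 = 8 * Num.sqrt 2 - 8.
Proof.
have c_gt0 := cos_pi_div_gt0 R (isT : (3 <= 8)%N).
have s_gt0 := sin_pi_div_gt0 R (isT : (3 <= 8)%N).
rewrite (@pi_n_mod4_0 R 8 isT erefl) /tan.
have : sin (pi / 8%:R + pi / 8%:R) = cos (pi / 8%:R + pi / 8%:R) :> R.
  by rewrite -cosBpihalf -cosN; congr cos; field.
rewrite sinD cosD; have h2 := cos2Dsin2 (pi / 8%:R : R).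
set c := cos (pi / 8%:R) in c_gt0 h2 *; set s := sin (pi / 8%:R) in s_gt0 h2 * => h.
have -> : (2 : R) = ((s + c) / c) ^+ 2.
  have e2 : (s + c) ^+ 2 = 2 * c ^+ 2 by nra.
  by rewrite expr_div_n e2; field; rewrite gt_eqF.
rewrite sqrtr_sqr ger0_norm ?divr_ge0 ?addr_ge0 ?ltW //.
by field; rewrite gt_eqF.
Qed.

Theorem mainTheorem4 (R : realType) (n : nat) (hn : (3 <= n)%N) :
  pi_n R n =
    n%:R / (2 * cos (pi / n%:R)) *
      (cos (pi / n%:R * (2 * ((n + 1) %/ 4)%N%:R - 1))
       - cos (pi / n%:R * (2 * ((n + 1) %/ 4)%N%:R + 1)))
  /\ ((n %% 4 = 0)%N -> pi_n R n = n%:R * tan (pi / n%:R))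
  /\ (odd n -> pi_n R n = n%:R * tan (pi / n%:R) * cos (pi / (2 * n%:R)))
  /\ ((n %% 4 = 2)%N -> pi_n R n = n%:R * sin (pi / n%:R))
  /\ (pi_n R 3 = 9 / 2 /\ pi_n R 4 = 4
      /\ pi_n R 5 = 5 * (5 - Num.sqrt 5) / 4
      /\ pi_n R 6 = 3 /\ pi_n R 8 = 8 * Num.sqrt 2 - 8).
Proof.
split; first exact: pi_n_cosE.
split; first exact: pi_n_mod4_0.
split; first exact: pi_n_odd.
split; first exact: pi_n_mod4_2.
by do !split; [exact: pi_n3 | exact: pi_n4 | exact: pi_n5 | exact: pi_n6 | exact: pi_n8].
Qed.
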